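(* Consider the three-dimensional stochastic Maxwell equations with multiplicative noise written in the stochastic Hamiltonian form $$\mathbf{K}\,{\rm d}_{t}\mathcal{E}+\mathbf{L}_{1}\mathcal{E}_{x}{\rm d}t+\mathbf{L}_{2}\mathcal{E}_{y}{\rm d}t+\mathbf{L}_{3}\mathcal{E}_{z}{\rm d}t=\nabla S(\mathcal{E})\circ{\rm d}W(t),$$ and the stochastic Runge-Kutta method described in the context, with temporal coefficients $(a_{kj},b_k)_{k,j=1}^r$ and spatial coefficients $(\widetilde{a}_{mn},\widetilde{b}_m)_{m,n=1}^s$ in $x$, $(\overline{a}_{pq},\overline{b}_p)_{p,q=1}^\iota$ in $y$, $(\widehat{a}_{lv},\widehat{b}_l)_{l,v=1}^\sigma$ in $z$. Assume $$b_kb_j-b_ka_{kj}-b_ja_{jk}=0,\quad \overline{b}_p\overline{b}_q-\overline{b}_p\overline{a}_{pq}-\overline{b}_q\overline a_{qp}=0,$$ $$\widetilde{b}_m\widetilde{b}_n-\widetilde{b}_m\widetilde{a}_{mn}-\widetilde{b}_n\widetilde{a}_{nm}=0,\quad \widehat{b}_l\widehat{b}_v-\widehat{b}_l\widehat{a}_{lv}-\widehat{b}_v\widehat{a}_{vl}=0$$ for all $k,j=1,\dots,r$, $m,n=1,\dots,s$, $p,q=1,\dots,\iota$, $l,v=1,\dots,\sigma$. Then the method satisfies, almost surely, the discrete stochastic multi-symplectic conservation law $$\frac{\omega^{\rho+1}-\omega^{\rho}}{\tau}+\frac{\kappa_{i_1+1}^{(1)}-\kappa_{i_1}^{(1)}}{\Delta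 x}+\frac{\kappa_{i_2+1}^{(2)}-\kappa_{i_2}^{(2)}}{\Delta y}+\frac{\kappa_{i_3+1}^{(3)}-\kappa_{i_3}^{(3)}}{\Delta z}=0,$$ where $\omega^\rho=\frac{1}{2}\sum_{m=1}^{s}\sum_{p=1}^{\iota}\sum_{l=1}^{\sigma}\widetilde{b}_m\overline{b}_p\widehat{b}_l\,{\rm d}\mathcal{E}_{mpl}^{\rho}\wedge \mathbf{K}{\rm d}\mathcal{E}_{mpl}^{\rho}$, $\kappa_{i_1}^{(1)}=\frac{1}{2}\sum_{k=1}^{r}\sum_{p=1}^{\iota}\sum_{l=1}^{\sigma}b_k\overline{b}_p\widehat{b}_l\,{\rm d}\mathcal{E}_{i_1 pl}^{k}\wedge \mathbf{L}_1{\rm d}\mathcal{E}_{i_1 pl}^{k}$, $\kappa_{i_2}^{(2)}=\frac{1}{2}\sum_{k=1}^{r}\sum_{m=1}^{s}\sum_{l=1}^{\sigma}b_k\widetilde{b}_m\widehat{b}_l\,{\rm d}\mathcal{E}_{mi_2 l}^{k}\wedge \mathbf{L}_2{\rm d}\mathcal{E}_{mi_2 l}^{k}$, $\kappa_{i_3}^{(3)}=\frac{1}{2}\sum_{k=1}^{r}\sum_{m=1}^{s}\sum_{p=1}^{\iota}b_k\widetilde{b}_m\overline{b}_p\,{\rm d}\mathcal{E}_{mpi_3}^{k}\wedge \mathbf{L}_3{\rm d}\mathcal{E}_{mpi_3}^{k}$.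
   Context: $\mathcal{E}=(H^T,E^T)^T\in\mathbb{R}^6$ with $H=(H_1,H_2,H_3)$, $E=(E_1,E_2,E_3)$; $S(\mathcal{E})=\frac{\lambda}{2}(|E_1|^2+|E_2|^2+|E_3|^2+|H_1|^2+|H_2|^2+|H_3|^2)$ for a real constant $\lambda$; $\mathbf{K}=\begin{pmatrix}0&-I_3\\ I_3&0\end{pmatrix}$, $\mathbf{L}_i=\begin{pmatrix}\mathcal{D}_i&0\\0&\mathcal{D}_i\end{pmatrix}$ with $\mathcal{D}_1=\begin{pmatrix}0&0&0\\0&0&-1\\0&1&0\end{pmatrix}$, $\mathcal{D}_2=\begin{pmatrix}0&0&1\\0&0&0\\-1&0&0\end{pmatrix}$, $\mathcal{D}_3=\begin{pmatrix}0&-1&0\\1&0&0\\0&0&0\end{pmatrix}$. $W$ is a $Q$-Wiener process and the equation is in the Stratonovich sense. The method, with time step $\tau$ and space steps $\Delta x,\Delta y,\Delta z$, has on each space-time cell stage values $\Upsilon_{mplk}\in\mathbb{R}^6$, discrete derivatives $\delta_t\Upsilon_{mplk},\delta_x\Upsilon_{mplk},\delta_y\Upsilon_{mplk},\delta_z\Upsilon_{mplk}$, time-level values $\mathcal{E}^\rho_{mpl},\mathcal{E}^{\rho+1}_{mpl}$, and face values $\mathcal{E}^k_{i_1pl},\mathcal{E}^k_{(i_1+1)pl}$, $\mathcal{E}^k_{mi_2l},\mathcal{E}^k_{m(i_2+1)l}$, $\mathcal{E}^k_{mpi_3},\mathcal{E}^k_{mp(i_3+1)}$, related by $\Upsilon_{mplk}=\mathcal{E}_{mpl}^{\rho}+\tau\sum_{j}a_{kj}\delta_t\Upsilon_{mplj}$,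 $\mathcal{E}_{mpl}^{\rho+1}=\mathcal{E}_{mpl}^{\rho}+\tau\sum_{k}b_{k}\delta_t\Upsilon_{mplk}$, $\Upsilon_{mplk}=\mathcal{E}_{i_1pl}^{k}+\Delta x\sum_{n}\widetilde{a}_{mn}\delta_{x}\Upsilon_{nplk}$, $\mathcal{E}_{(i_1+1)pl}^{k}=\mathcal{E}_{i_1pl}^{k}+\Delta x\sum_{m}\widetilde{b}_{m}\delta_{x}\Upsilon_{mplk}$, $\Upsilon_{mplk}=\mathcal{E}_{mi_2l}^{k}+\Delta y\sum_{q}\overline{a}_{pq}\delta_{y}\Upsilon_{mqlk}$, $\mathcal{E}_{m(i_{2}+1)l}^{k}=\mathcal{E}_{mi_2l}^{k}+\Delta y\sum_{p}\overline{b}_{p}\delta_{y}\Upsilon_{mplk}$, $\Upsilon_{mplk}=\mathcal{E}_{mpi_3}^{k}+\Delta z\sum_{v}\widehat{a}_{lv}\delta_{z}\Upsilon_{mpvk}$, $\mathcal{E}_{mp(i_3+1)}^{k}=\mathcal{E}_{mpi_3}^{k}+\Delta z\sum_{u}\widehat{b}_{u}\delta_{z}\Upsilon_{mpuk}$, $\tau\mathbf{K}\delta_{t}\Upsilon_{mplk}+\tau\sum_{i=1}^3\mathbf{L}_{i}\delta_{x_i}\Upsilon_{mplk}=\nabla S(\Upsilon_{mplk})\Delta W$, where $(\delta_{x_1},\delta_{x_2},\delta_{x_3})=(\delta_x,\delta_y,\delta_z)$ and $\Delta W$ is the real-valued Wiener increment over the time step at the corresponding stage point. ${\rm d}$ is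 the exterior differential in phase space and ${\rm d}\mathcal{E}\wedge\mathbf{M}{\rm d}\mathcal{E}=\sum_{a,b}\mathbf{M}_{ab}{\rm d}\mathcal{E}_a\wedge{\rm d}\mathcal{E}_b$. *)

From HB Require Import structures.
From mathcomp Require Import all_boot all_order all_algebra.
From mathcomp Require Import all_classical all_reals all_analysis.
Set Implicit Arguments. Unset Strict Implicit. Unset Printing Implicit Defensive.
Import Order.TTheory GRing.Theory Num.Theory.
Import numFieldNormedType.Exports.
Local Open Scope ring_scope.

Definition D1 {R : nzRingType} : 'M[R]_3 :=
  \matrix_(i < 3, j < 3)
    (if ((i : nat) == 1%N) && ((j : nat) == 2%N) then -1
     else if ((i : nat) == 2%N) && ((j : nat) == 1%N) then 1 else 0).
Definition D2 {R : nzRingType} : 'M[R]_3 :=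
  \matrix_(i < 3, j < 3)
    (if ((i : nat) == 0%N) && ((j : nat) == 2%N) then 1
     else if ((i : nat) == 2%N) && ((j : nat) == 0%N) then -1 else 0).
Definition D3 {R : nzRingType} : 'M[R]_3 :=
  \matrix_(i < 3, j < 3)
    (if ((i : nat) == 0%N) && ((j : nat) == 1%N) then -1
     else if ((i : nat) == 1%N) && ((j : nat) == 0%N) then 1 else 0).

Definition Kmx {R : nzRingType} : 'M[R]_6 := @block_mx R 3 3 3 3 0 (- 1%:M) 1%:M 0.
Definition L1mx {R : nzRingType} : 'M[R]_6 := @block_mx R 3 3 3 3 D1 0 0 D1.
Definition L2mx {R : nzRingType} : 'M[R]_6 := @block_mx R 3 3 3 3 D2 0 0 D2.
Definition L3mx {R : nzRingType} : 'M[R]_6 := @block_mx R 3 3 3 3 D3 0 0 D3.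

Definition Sham {R : fieldType} (lam : R) (e : 'I_6 -> R) : R :=
  lam / 2%:R * \sum_(c < 6) e c ^+ 2.
Definition gradS {R : nzRingType} (lam : R) (e : 'I_6 -> R) : 'I_6 -> R :=
  fun c => lam * e c.

(* Exterior calculus on the phase space V: a state E (6 component
   functions on V) has differential dE_a = 'd (E a).  The 2-form
   dE /\ M dE = sum_{a,b} M_ab dE_a /\ dE_b, evaluated at the point th
   on the tangent vectors xi, eta, with
   (dA /\ dB)(xi, eta) = dA(xi) dB(eta) - dA(eta) dB(xi). *)
Definition wedgeM {R : realType} {V : normedModType R}
  (M : 'M[R]_6) (F : 'I_6 -> V -> R) (th xi eta : V) : R :=
  \sum_(a < 6) \sum_(b < 6)
     M a b * ('d (F a) th xi * 'd (F b) th eta - 'd (F a) th eta * 'd (F b) th xi).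

(* Differentiating the scheme at a point [th] of phase space along [xi] and [eta]
   replaces every 6-vector of functions by its tangent frame, a 6 x 2 matrix, and
   turns each 2-form dE /\ M dE (xi, eta) into the bilinear form [wedge_form M] on
   frames.  The scheme is linear with constant coefficients, so the frames obey the
   same Runge-Kutta relations.  For a tableau with b_k b_j = b_k a_kj + b_j a_jk the
   increment of any quadratic form beta(y, y) over one step is
   h sum_k b_k (beta(Y_k, D_k) + beta(D_k, Y_k)), because the h^2 terms cancel.
   Hence the four flux differences are weighted sums, over all stages, of these
   polarized terms, and it suffices that they add up to zero at each stage.  Since
   K and L_i are skew, each polarized term is twice the symplectic pairing of the
   stage frame with M D; by the stage equation their sum is the pairing of the stage
   frame with a scalar multiple of itself, which vanishes whatever the noise. *)

From HB Require Import structures.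
From mathcomp Require Import all_boot all_order all_algebra.
From mathcomp Require Import all_classical all_reals all_analysis.
From mathcomp Require Import ring.
Import Order.TTheory GRing.Theory Num.Theory.
Import numFieldNormedType.Exports.
Local Open Scope ring_scope.
Set Implicit Arguments. Unset Strict Implicit. Unset Printing Implicit Defensive.

Definition polar (R : zmodType) (U : Type) (beta : U -> U -> R) (u v : U) : R :=
  beta u v + beta v u.

Section BiscalarSums.
Variables (R : comNzRingType) (U : lmodType R) (beta : {biscalar U}).

Lemma biscalar_suml I (s : seq I) (c : I -> R) (D : I -> U) u :
  beta (\sum_(i <- s) c i *: D i) u = \sum_(i <- s) c i * beta (D i) u.
Proof. by rewrite linear_sumlz; apply: eq_bigr => i _; rewrite linearZl_LR. Qed.

Lemma biscalar_sumr I (s : seq I) (c : I -> R) (D : I -> U) u :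
  beta u (\sum_(i <- s) c i *: D i) = \sum_(i <- s) c i * beta u (D i).
Proof. by rewrite linear_sumr; apply: eq_bigr => i _; rewrite linearZr_LR. Qed.

End BiscalarSums.

Section SymplecticRungeKutta.
Variables (R : comNzRingType) (U : lmodType R) (beta : {biscalar U}).
Variables (r : nat) (a : 'I_r -> 'I_r -> R) (b : 'I_r -> R).
Hypothesis symplectic_coef : forall k j, b k * b j - b k * a k j - b j * a j k = 0.

Lemma rk_bilinear_increment h (y0 y1 : U) (Y D : 'I_r -> U) :
  (forall k, Y k = y0 + h *: \sum_(j < r) a k j *: D j) ->
  y1 = y0 + h *: \sum_(k < r) b k *: D k ->
  beta y1 y1 - beta y0 y0 = h * \sum_(k < r) b k * polar beta (Y k) (D k).
Proof.
move=> stage ->; pose G k j := beta (D k) (D j).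
have polar_stage k : polar beta (Y k) (D k)
    = polar beta y0 (D k) + h * \sum_(j < r) a k j * (G j k + G k j).
  rewrite /polar stage linearDl linearDr /= linearZl_LR linearZr_LR /=.
  rewrite biscalar_suml biscalar_sumr /G.
  under [in RHS]eq_bigr do rewrite mulrDr.
  rewrite big_split /=; ring.
have coef : \sum_(k < r) \sum_(j < r) b k * b j * G k j
    = \sum_(k < r) b k * \sum_(j < r) a k j * (G j k + G k j).
  under [RHS]eq_bigr do rewrite mulr_sumr.
  under [RHS]eq_bigr do (under eq_bigr do rewrite !mulrDr !mulrA; rewrite big_split).
  rewrite big_split /= [X in X + _]exchange_big -big_split /=.
  apply: eq_bigr => k _; rewrite -big_split; apply: eq_bigr => j _ /=.
  rewrite -mulrDl; congr (_ * _); apply/subr0_eq.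
  by rewrite -(symplectic_coef k j); ring.
rewrite linearDl !linearDr /= !linearZl_LR !linearZr_LR /= !biscalar_suml !biscalar_sumr.
under [in RHS]eq_bigr do rewrite polar_stage /polar !mulrDr mulrCA.
under [X in h * (h * X)]eq_bigr do rewrite biscalar_sumr mulr_sumr.
under [X in h * (h * X)]eq_bigr do under eq_bigr do rewrite mulrA.
rewrite coef !big_split -mulr_sumr /=; ring.
Qed.

End SymplecticRungeKutta.

Section WeightedIncrements.
Variables (R : fieldType) (U : lmodType R) (beta : {biscalar U}).
Variables (r : nat) (a : 'I_r -> 'I_r -> R) (b : 'I_r -> R).
Hypothesis symplectic_coef : forall k j, b k * b j - b k * a k j - b j * a j k = 0.

Lemma rk_weighted_difference_quotient n1 n2 n3 (u : 'I_n1 -> R) (v : 'I_n2 -> R) (w : 'I_n3 -> R) h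
    (e0 e1 : 'I_n1 -> 'I_n2 -> 'I_n3 -> U) (Y D : 'I_n1 -> 'I_n2 -> 'I_n3 -> 'I_r -> U) :
  h != 0 ->
  (forall i j l k, Y i j l k = e0 i j l + h *: \sum_(q < r) a k q *: D i j l q) ->
  (forall i j l, e1 i j l = e0 i j l + h *: \sum_(k < r) b k *: D i j l k) ->
  (\sum_i \sum_j \sum_l u i * v j * w l * beta (e1 i j l) (e1 i j l)
   - \sum_i \sum_j \sum_l u i * v j * w l * beta (e0 i j l) (e0 i j l)) / h
  = \sum_i \sum_j \sum_l \sum_(k < r)
      u i * v j * w l * b k * polar beta (Y i j l k) (D i j l k).
Proof.
move=> h_neq0 stage step; apply: (mulIf h_neq0); rewrite divfK // mulr_suml.
rewrite -sumrB; apply: eq_bigr => i _; rewrite -sumrB mulr_suml.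
apply: eq_bigr => j _; rewrite -sumrB mulr_suml; apply: eq_bigr => l _.
rewrite -mulrBr (rk_bilinear_increment beta symplectic_coef (stage i j l) (step i j l)).
rewrite mulrCA mulr_sumr mulr_sumr mulr_suml; apply: eq_bigr => k _; ring.
Qed.

End WeightedIncrements.

Section WedgeForm.
Variables (R : comNzRingType) (n : nat).
Implicit Types (M : 'M[R]_n) (P Q S : 'M[R]_(n, 2)).

Definition symplectic_pairing P S : R := (P^T *m S) 0 1 - (P^T *m S) 1 0.

Definition wedge_form M P Q : R := symplectic_pairing P (M *m Q).

Lemma symplectic_pairingDr P S1 S2 :
  symplectic_pairing P (S1 + S2) = symplectic_pairing P S1 + symplectic_pairing P S2.
Proof. by rewrite /symplectic_pairing mulmxDr !mxE; ring. Qed.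

Lemma symplectic_pairingZr P c S :
  symplectic_pairing P (c *: S) = c * symplectic_pairing P S.
Proof. by rewrite /symplectic_pairing -scalemxAr !mxE mulrBr. Qed.

Lemma symplectic_pairing_alt P : symplectic_pairing P P = 0.
Proof.
rewrite /symplectic_pairing !mxE; apply/eqP; rewrite subr_eq0; apply/eqP.
by apply: eq_bigr => c _; rewrite !mxE mulrC.
Qed.

Lemma wedge_form_is_bilinear M :
  bilinear_for (GRing.Scale.Law.clone _ _ *%R _) (GRing.Scale.Law.clone _ _ *%R _)
    (wedge_form M).
Proof.
split=> [Q|P] c P1 P2 /=.
- by rewrite /wedge_form /symplectic_pairing linearP /= mulmxDl -scalemxAl !mxE; ring.
- by rewrite /wedge_form mulmxDr -scalemxAr symplectic_pairingDr symplectic_pairingZr.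
Qed.

HB.instance Definition _ M := bilinear_isBilinear.Build R _ _ _ _ _ (wedge_form M)
  (wedge_form_is_bilinear M).

Lemma wedge_formC M P Q : M^T = - M -> wedge_form M Q P = wedge_form M P Q.
Proof.
move=> skewM; have tr_pairing : Q^T *m (M *m P) = - (P^T *m (M *m Q))^T.
  by rewrite !trmx_mul trmxK skewM mulmxA mulmxN mulNmx opprK.
by rewrite /wedge_form /symplectic_pairing tr_pairing !mxE; ring.
Qed.

End WedgeForm.

Section LocalConservation.
Variables (R : idomainType) (n : nat) (K L1 L2 L3 : 'M[R]_n).
Hypotheses (skewK : K^T = - K) (skewL1 : L1^T = - L1).
Hypotheses (skewL2 : L2^T = - L2) (skewL3 : L3^T = - L3).

Lemma wedge_form_local_conservation h mu (P Qt Qx Qy Qz : 'M[R]_(n, 2)) :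
  h != 0 -> h *: (K *m Qt + (L1 *m Qx + L2 *m Qy + L3 *m Qz)) = mu *: P ->
  polar (wedge_form K) P Qt + polar (wedge_form L1) P Qx
  + polar (wedge_form L2) P Qy + polar (wedge_form L3) P Qz = 0.
Proof.
move=> h_neq0 stage.
have flux0 : symplectic_pairing P (K *m Qt + (L1 *m Qx + L2 *m Qy + L3 *m Qz)) = 0.
  apply: (mulfI h_neq0).
  by rewrite -symplectic_pairingZr stage symplectic_pairingZr symplectic_pairing_alt !mulr0.
move: flux0; rewrite !symplectic_pairingDr => flux0.
rewrite /polar !(wedge_formC P) // /wedge_form -[RHS](mulr0 2%:R) -flux0; ring.
Qed.

End LocalConservation.

Section MultisymplecticRungeKutta.
Variables (R : fieldType) (U : lmodType R) (r s iota sigma : nat).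
Variables (Y Dt Dx Dy Dz : 'I_s -> 'I_iota -> 'I_sigma -> 'I_r -> U).
Variables (E0 E1 : 'I_s -> 'I_iota -> 'I_sigma -> U).
Variables (X0 X1 : 'I_r -> 'I_iota -> 'I_sigma -> U).
Variables (W0 W1 : 'I_r -> 'I_s -> 'I_sigma -> U).
Variables (Z0 Z1 : 'I_r -> 'I_s -> 'I_iota -> U).
Variables (B0 B1 B2 B3 : {biscalar U}) (tau dx dy dz : R).
Variables (a : 'I_r -> 'I_r -> R) (b : 'I_r -> R).
Variables (at_ : 'I_s -> 'I_s -> R) (bt : 'I_s -> R).
Variables (ab : 'I_iota -> 'I_iota -> R) (bb : 'I_iota -> R).
Variables (ah : 'I_sigma -> 'I_sigma -> R) (bh : 'I_sigma -> R).
Hypotheses (tau_neq0 : tau != 0) (dx_neq0 : dx != 0).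
Hypotheses (dy_neq0 : dy != 0) (dz_neq0 : dz != 0).
Hypothesis coef_t : forall k j, b k * b j - b k * a k j - b j * a j k = 0.
Hypothesis coef_x : forall m n, bt m * bt n - bt m * at_ m n - bt n * at_ n m = 0.
Hypothesis coef_y : forall p q, bb p * bb q - bb p * ab p q - bb q * ab q p = 0.
Hypothesis coef_z : forall l v, bh l * bh v - bh l * ah l v - bh v * ah v l = 0.
Hypothesis stage_t :
  forall m p l k, Y m p l k = E0 m p l + tau *: \sum_(j < r) a k j *: Dt m p l j.
Hypothesis step_t :
  forall m p l, E1 m p l = E0 m p l + tau *: \sum_(k < r) b k *: Dt m p l k.
Hypothesis stage_x :
  forall m p l k, Y m p l k = X0 k p l + dx *: \sum_(n < s) at_ m n *: Dx n p l k.
Hypothesis step_x :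
  forall k p l, X1 k p l = X0 k p l + dx *: \sum_(m < s) bt m *: Dx m p l k.
Hypothesis stage_y :
  forall m p l k, Y m p l k = W0 k m l + dy *: \sum_(q < iota) ab p q *: Dy m q l k.
Hypothesis step_y :
  forall k m l, W1 k m l = W0 k m l + dy *: \sum_(p < iota) bb p *: Dy m p l k.
Hypothesis stage_z :
  forall m p l k, Y m p l k = Z0 k m p + dz *: \sum_(v < sigma) ah l v *: Dz m p v k.
Hypothesis step_z :
  forall k m p, Z1 k m p = Z0 k m p + dz *: \sum_(u < sigma) bh u *: Dz m p u k.
Hypothesis local_conservation : forall m p l k,
  polar B0 (Y m p l k) (Dt m p l k) + polar B1 (Y m p l k) (Dx m p l k)
  + polar B2 (Y m p l k) (Dy m p l k) + polar B3 (Y m p l k) (Dz m p l k) = 0.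

Lemma discrete_multisymplectic_conservation :
  (1 / 2%:R * (\sum_(m < s) \sum_(p < iota) \sum_(l < sigma)
                 bt m * bb p * bh l * B0 (E1 m p l) (E1 m p l))
   - 1 / 2%:R * (\sum_(m < s) \sum_(p < iota) \sum_(l < sigma)
                 bt m * bb p * bh l * B0 (E0 m p l) (E0 m p l))) / tau
  + (1 / 2%:R * (\sum_(k < r) \sum_(p < iota) \sum_(l < sigma)
                 b k * bb p * bh l * B1 (X1 k p l) (X1 k p l))
   - 1 / 2%:R * (\sum_(k < r) \sum_(p < iota) \sum_(l < sigma)
                 b k * bb p * bh l * B1 (X0 k p l) (X0 k p l))) / dx
  + (1 / 2%:R * (\sum_(k < r) \sum_(m < s) \sum_(l < sigma)
                 b k * bt m * bh l * B2 (W1 k m l) (W1 k m l))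
   - 1 / 2%:R * (\sum_(k < r) \sum_(m < s) \sum_(l < sigma)
                 b k * bt m * bh l * B2 (W0 k m l) (W0 k m l))) / dy
  + (1 / 2%:R * (\sum_(k < r) \sum_(m < s) \sum_(p < iota)
                 b k * bt m * bb p * B3 (Z1 k m p) (Z1 k m p))
   - 1 / 2%:R * (\sum_(k < r) \sum_(m < s) \sum_(p < iota)
                 b k * bt m * bb p * B3 (Z0 k m p) (Z0 k m p))) / dz = 0.
Proof.
rewrite -!mulrBr -!mulrA.
rewrite (rk_weighted_difference_quotient B0 coef_t _ _ _ tau_neq0 stage_t step_t).
rewrite (rk_weighted_difference_quotient B1 coef_x _ _ _ dx_neq0 (fun k p l m => stage_x m p l k) step_x).
rewrite (rk_weighted_difference_quotient B2 coef_y _ _ _ dy_neq0 (fun k m l p => stage_y m p l k) step_y).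
rewrite (rk_weighted_difference_quotient B3 coef_z _ _ _ dz_neq0 (fun k m p l => stage_z m p l k) step_z).
have reorder_t (F : 'I_s -> 'I_iota -> 'I_sigma -> 'I_r -> R) :
    \sum_m \sum_p \sum_l \sum_k F m p l k = \sum_k \sum_m \sum_p \sum_l F m p l k.
  rewrite [RHS]exchange_big; apply: eq_bigr => m _.
  by rewrite [RHS]exchange_big; apply: eq_bigr => p _; rewrite exchange_big.
have reorder_x (F : 'I_r -> 'I_iota -> 'I_sigma -> 'I_s -> R) :
    \sum_k \sum_p \sum_l \sum_m F k p l m = \sum_k \sum_m \sum_p \sum_l F k p l m.
  apply: eq_bigr => k _; rewrite [RHS]exchange_big; apply: eq_bigr => p _.
  exact: exchange_big.
have reorder_y (F : 'I_r -> 'I_s -> 'I_sigma -> 'I_iota -> R) :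
    \sum_k \sum_m \sum_l \sum_p F k m l p = \sum_k \sum_m \sum_p \sum_l F k m l p.
  by apply: eq_bigr => k _; apply: eq_bigr => m _; rewrite exchange_big.
rewrite reorder_t reorder_x reorder_y !mul1r -!mulrDr -!big_split big1 ?mulr0 // => k _.
rewrite -!big_split big1 // => m _; rewrite -!big_split big1 // => p _.
rewrite -!big_split big1 //= => l _.
rewrite -[RHS](mulr0 (bt m * bb p * bh l * b k)) -(local_conservation m p l k); ring.
Qed.

End MultisymplecticRungeKutta.

Section MaxwellStructure.
Context {R : nzRingType}.

Lemma trmx_D1 : (D1 : 'M[R]_3)^T = - D1.
Proof.
apply/matrixP => i j; rewrite !mxE.
by case: i => [[|[|[|?]]] ?]; case: j => [[|[|[|?]]] ?]; rewrite /= ?oppr0 ?opprK.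
Qed.

Lemma trmx_D2 : (D2 : 'M[R]_3)^T = - D2.
Proof.
apply/matrixP => i j; rewrite !mxE.
by case: i => [[|[|[|?]]] ?]; case: j => [[|[|[|?]]] ?]; rewrite /= ?oppr0 ?opprK.
Qed.

Lemma trmx_D3 : (D3 : 'M[R]_3)^T = - D3.
Proof.
apply/matrixP => i j; rewrite !mxE.
by case: i => [[|[|[|?]]] ?]; case: j => [[|[|[|?]]] ?]; rewrite /= ?oppr0 ?opprK.
Qed.

Lemma trmx_block_diag_skew n (A : 'M[R]_n) :
  A^T = - A -> (block_mx A 0 0 A)^T = - block_mx A 0 0 A.
Proof. by move=> skewA; rewrite tr_block_mx skewA !trmx0 opp_block_mx !oppr0. Qed.

Lemma trmx_Kmx : (Kmx : 'M[R]_6)^T = - Kmx.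
Proof.
rewrite /Kmx (@tr_block_mx _ 3 3 3 3) !trmx0 trmx1 linearN /= trmx1.
by rewrite (@opp_block_mx _ 3 3 3 3) !oppr0 opprK.
Qed.

Lemma trmx_L1mx : (L1mx : 'M[R]_6)^T = - L1mx.
Proof. exact: (trmx_block_diag_skew trmx_D1). Qed.

Lemma trmx_L2mx : (L2mx : 'M[R]_6)^T = - L2mx.
Proof. exact: (trmx_block_diag_skew trmx_D2). Qed.

Lemma trmx_L3mx : (L3mx : 'M[R]_6)^T = - L3mx.
Proof. exact: (trmx_block_diag_skew trmx_D3). Qed.

End MaxwellStructure.

Section TangentFrames.
Variables (R : realType) (V : normedModType R).

Global Instance is_diff_sum (th : V) (I : Type) (s : seq I) (f df : I -> V -> R) :
  (forall i, is_diff th (f i) (df i)) ->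
  is_diff th (fun t => \sum_(i <- s) f i t) (fun v => \sum_(i <- s) df i v).
Proof.
move=> fi; elim: s => [|i s IH].
  have -> : (fun t => \sum_(i <- [::]) f i t) = cst 0 by apply/funext => t; rewrite big_nil.
  have -> : (fun v => \sum_(i <- [::]) df i v) = 0 by apply/funext => v; rewrite big_nil.
  exact: is_diff_cst.
have -> : (fun t => \sum_(j <- i :: s) f j t) = f i + (fun t => \sum_(j <- s) f j t).
  by apply/funext => t; rewrite big_cons.
have -> : (fun v => \sum_(j <- i :: s) df j v) = df i + (fun v => \sum_(j <- s) df j v).
  by apply/funext => v; rewrite big_cons.
exact: is_diffD.
Qed.

Definition tangent_frame n (F : 'I_n -> V -> R) (th xi eta : V) : 'M[R]_(n, 2) :=
  \matrix_(c, z) 'd (F c) th (if z == 0 then xi else eta).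

Context {th xi eta : V}.
Local Notation T F := (tangent_frame F th xi eta).

Lemma tangent_frame_affine n r (F G : 'I_n -> V -> R) (H : 'I_r -> 'I_n -> V -> R)
    h (w : 'I_r -> R) :
  (forall c t, F c t = G c t + h * \sum_(j < r) w j * H j c t) ->
  (forall c, differentiable (G c) th) -> (forall j c, differentiable (H j c) th) ->
  T F = T G + h *: \sum_(j < r) w j *: T (H j).
Proof.
move=> eqF dG dH; apply/matrixP => c z; rewrite !mxE summxE.
under [in RHS]eq_bigr do rewrite !mxE.
have ? := differentiableP (dG c); have ? j := differentiableP (dH j c).
by rewrite (funext (eqF c)) diff_val.
Qed.

Lemma tangent_frame_stage (M0 M1 M2 M3 : 'M[R]_6) (F0 F1 F2 F3 G : 'I_6 -> V -> R) h lam w :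
  (forall c t, h * (\sum_(d < 6) M0 c d * F0 d t)
     + h * (\sum_(d < 6) (M1 c d * F1 d t + M2 c d * F2 d t + M3 c d * F3 d t))
     = gradS lam (fun d => G d t) c * w) ->
  (forall c, differentiable (F0 c) th) -> (forall c, differentiable (F1 c) th) ->
  (forall c, differentiable (F2 c) th) -> (forall c, differentiable (F3 c) th) ->
  (forall c, differentiable (G c) th) ->
  h *: (M0 *m T F0 + (M1 *m T F1 + M2 *m T F2 + M3 *m T F3)) = (lam * w) *: T G.
Proof.
move=> stage dF0 dF1 dF2 dF3 dG; apply/matrixP => c z.
rewrite !mxE mulrDr -!big_split /=.
under eq_bigr do rewrite mxE.
under [X in _ + h * X]eq_bigr do rewrite !mxE.
have ? d := differentiableP (dF0 d); have ? d := differentiableP (dF1 d).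
have ? d := differentiableP (dF2 d); have ? d := differentiableP (dF3 d).
have ? := differentiableP (dG c).
have stage_c : (fun t => h * (\sum_(d < 6) M0 c d * F0 d t)
     + h * (\sum_(d < 6) (M1 c d * F1 d t + M2 c d * F2 d t + M3 c d * F3 d t)))
   = fun t => lam * w * G c t.
  by apply/funext => t; rewrite stage /gradS mulrAC.
have := congr1 (fun f => 'd f th (if z == 0 then xi else eta)) stage_c.
by rewrite !diff_val.
Qed.

End TangentFrames.

Lemma wedgeME (R : realType) (V : normedModType R) (M : 'M[R]_6) :
  wedgeM M = fun (F : 'I_6 -> V -> R) th xi eta =>
    wedge_form M (tangent_frame F th xi eta) (tangent_frame F th xi eta).
Proof.
apply/funext => F; apply/funext => th; apply/funext => xi; apply/funext => eta.
rewrite /wedgeM /wedge_form /symplectic_pairing !mxE -sumrB.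
apply: eq_bigr => c _; rewrite !mxE !mulr_sumr -sumrB.
by apply: eq_bigr => d _; rewrite !mxE /=; ring.
Qed.

Theorem mainTheorem2
  (R : realType) (V : normedModType R)  (* V = phase space of the exterior differential d *)
  (r s iota sigma : nat) (lam tau dx dy dz : R)
  (a : 'I_r -> 'I_r -> R) (b : 'I_r -> R)
  (at_ : 'I_s -> 'I_s -> R) (bt : 'I_s -> R)
  (ab : 'I_iota -> 'I_iota -> R) (bb : 'I_iota -> R)
  (ah : 'I_sigma -> 'I_sigma -> R) (bh : 'I_sigma -> R)
  (* one realization of the Wiener increments at the spatial stage points *)
  (dW : 'I_s -> 'I_iota -> 'I_sigma -> R)
  (* stage values Upsilon_{mplk} and their discrete derivatives *)
  (Y dtY dxY dyY dzY : 'I_s -> 'I_iota -> 'I_sigma -> 'I_r -> 'I_6 -> V -> R)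
  (* time-level values E^rho_{mpl}, E^{rho+1}_{mpl} *)
  (E0 E1 : 'I_s -> 'I_iota -> 'I_sigma -> 'I_6 -> V -> R)
  (* face values E^k_{i1 p l}, E^k_{(i1+1) p l} *)
  (X0 X1 : 'I_r -> 'I_iota -> 'I_sigma -> 'I_6 -> V -> R)
  (* face values E^k_{m i2 l}, E^k_{m (i2+1) l} *)
  (W0 W1 : 'I_r -> 'I_s -> 'I_sigma -> 'I_6 -> V -> R)
  (* face values E^k_{m p i3}, E^k_{m p (i3+1)} *)
  (Z0 Z1 : 'I_r -> 'I_s -> 'I_iota -> 'I_6 -> V -> R) :
  0 < tau -> 0 < dx -> 0 < dy -> 0 < dz ->
  (* symplecticity conditions on the coefficients *)
  (forall k j, b k * b j - b k * a k j - b j * a j k = 0) ->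
  (forall p q, bb p * bb q - bb p * ab p q - bb q * ab q p = 0) ->
  (forall m n, bt m * bt n - bt m * at_ m n - bt n * at_ n m = 0) ->
  (forall l v, bh l * bh v - bh l * ah l v - bh v * ah v l = 0) ->
  (* all quantities are differentiable functions on phase space *)
  (forall m p l k c th,
     [/\ differentiable (Y m p l k c) th, differentiable (dtY m p l k c) th,
         differentiable (dxY m p l k c) th, differentiable (dyY m p l k c) th
       & differentiable (dzY m p l k c) th]) ->
  (forall m p l c th, differentiable (E0 m p l c) th /\ differentiable (E1 m p l c) th) ->
  (forall k p l c th, differentiable (X0 k p l c) th /\ differentiable (X1 k p l c) th) ->
  (forall k m l c th, differentiable (W0 k m l c) th /\ differentiable (W1 k m l c) th) ->
  (forall k m p c th, differentiable (Z0 k m p c) th /\ differentiable (Z1 k m p c) th) ->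
  (* the method, at every point of phase space *)
  (forall m p l k c th,
     Y m p l k c th = E0 m p l c th + tau * \sum_(j < r) a k j * dtY m p l j c th) ->
  (forall m p l c th,
     E1 m p l c th = E0 m p l c th + tau * \sum_(k < r) b k * dtY m p l k c th) ->
  (forall m p l k c th,
     Y m p l k c th = X0 k p l c th + dx * \sum_(n < s) at_ m n * dxY n p l k c th) ->
  (forall k p l c th,
     X1 k p l c th = X0 k p l c th + dx * \sum_(m < s) bt m * dxY m p l k c th) ->
  (forall m p l k c th,
     Y m p l k c th = W0 k m l c th + dy * \sum_(q < iota) ab p q * dyY m q l k c th) ->
  (forall k m l c th,
     W1 k m l c th = W0 k m l c th + dy * \sum_(p < iota) bb p * dyY m p l k c th) ->
  (forall m p l k c th,
     Y m p l k c th = Z0 k m p c th + dz * \sum_(v < sigma) ah l v * dzY m p v k c th) ->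
  (forall k m p c th,
     Z1 k m p c th = Z0 k m p c th + dz * \sum_(u < sigma) bh u * dzY m p u k c th) ->
  (forall m p l k c th,
     tau * (\sum_(d < 6) Kmx c d * dtY m p l k d th)
     + tau * (\sum_(d < 6) (L1mx c d * dxY m p l k d th + L2mx c d * dyY m p l k d th
                            + L3mx c d * dzY m p l k d th))
     = gradS lam (fun d => Y m p l k d th) c * dW m p l) ->
  (* conclusion: discrete stochastic multi-symplectic conservation law *)
  let omega (E : 'I_s -> 'I_iota -> 'I_sigma -> 'I_6 -> V -> R) th xi eta :=
    1 / 2%:R * \sum_(m < s) \sum_(p < iota) \sum_(l < sigma)
      bt m * bb p * bh l * wedgeM Kmx (E m p l) th xi eta in
  let kappa1 (E : 'I_r -> 'I_iota -> 'I_sigma -> 'I_6 -> V -> R) th xi eta :=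
    1 / 2%:R * \sum_(k < r) \sum_(p < iota) \sum_(l < sigma)
      b k * bb p * bh l * wedgeM L1mx (E k p l) th xi eta in
  let kappa2 (E : 'I_r -> 'I_s -> 'I_sigma -> 'I_6 -> V -> R) th xi eta :=
    1 / 2%:R * \sum_(k < r) \sum_(m < s) \sum_(l < sigma)
      b k * bt m * bh l * wedgeM L2mx (E k m l) th xi eta in
  let kappa3 (E : 'I_r -> 'I_s -> 'I_iota -> 'I_6 -> V -> R) th xi eta :=
    1 / 2%:R * \sum_(k < r) \sum_(m < s) \sum_(p < iota)
      b k * bt m * bb p * wedgeM L3mx (E k m p) th xi eta in
  forall th xi eta : V,
    (omega E1 th xi eta - omega E0 th xi eta) / tau
    + (kappa1 X1 th xi eta - kappa1 X0 th xi eta) / dx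
    + (kappa2 W1 th xi eta - kappa2 W0 th xi eta) / dy
    + (kappa3 Z1 th xi eta - kappa3 Z0 th xi eta) / dz = 0.
Proof.
move=> tau_gt0 dx_gt0 dy_gt0 dz_gt0 coef_t coef_y coef_x coef_z diffY diffE diffX diffW
  diffZ stage_t step_t stage_x step_x stage_y step_y stage_z step_z stage.
move=> omega kappa1 kappa2 kappa3 th xi eta.
have [dY dYt dYx dYy dYz] : [/\ forall m p l k c, differentiable (Y m p l k c) th,
    forall m p l k c, differentiable (dtY m p l k c) th,
    forall m p l k c, differentiable (dxY m p l k c) th,
    forall m p l k c, differentiable (dyY m p l k c) th
  & forall m p l k c, differentiable (dzY m p l k c) th].
  by split=> m p l k c; case: (diffY m p l k c th).
have dE0 m p l c : differentiable (E0 m p l c) th by case: (diffE m p l c th).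
have dX0 k p l c : differentiable (X0 k p l c) th by case: (diffX k p l c th).
have dW0 k m l c : differentiable (W0 k m l c) th by case: (diffW k m l c th).
have dZ0 k m p c : differentiable (Z0 k m p c) th by case: (diffZ k m p c th).
rewrite /omega /kappa1 /kappa2 /kappa3 !wedgeME /=.
pose T4 (F : 'I_s -> 'I_iota -> 'I_sigma -> 'I_r -> 'I_6 -> V -> R) m p l k :=
  tangent_frame (F m p l k) th xi eta.
apply: (discrete_multisymplectic_conservation (Y := T4 Y) (Dt := T4 dtY) (Dx := T4 dxY)
  (Dy := T4 dyY) (Dz := T4 dzY)) => //; try exact: lt0r_neq0.
all: try by move=> *; apply: tangent_frame_affine.
move=> m p l k; exact: (wedge_form_local_conservation trmx_Kmx trmx_L1mx trmx_L2mx trmx_L3mx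
  (lt0r_neq0 tau_gt0) (tangent_frame_stage (stage m p l k) _ _ _ _ _)).
Qed.
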